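(* Let $N\ge 2$. For every $N$-player game $G$ and every player $i\in A$, $$R_i(G)\le (N-1)\sum_{j\in A,\,j\neq i}R_j(G).$$
   Context: Let $A=\{1,\dots,N\}$ be a finite set of players. A game is any function $G:2^A\to\mathbb{R}$ (no normalization such as $G(\emptyset)=0$ is assumed). For a player $i$ and a coalition $S\subseteq A\setminus\{i\}$, the marginal contribution is $d_iG(S)=G(S\cup\{i\})-G(S)$. Let $f_i$ be a random subset of $A\setminus\{i\}$ with distribution $\Pr\{f_i=S\}=\frac{|S|!\,(N-|S|-1)!}{N!}$ for each $S\subseteq A\setminus\{i\}$. The Shapley value of $G$ for player $i$ is $V_i(G)=\mathbf{E}[d_iG(f_i)]$ and the Shapley uncertainty of $G$ for player $i$ is $R_i(G)=\mathrm{Var}[d_iG(f_i)]$. *)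

From mathcomp Require Import all_boot all_order all_algebra.
Set Implicit Arguments. Unset Strict Implicit. Unset Printing Implicit Defensive.
Import Order.TTheory GRing.Theory Num.Theory.
Local Open Scope ring_scope.

(* Players A = 'I_N; a game is any function from coalitions {set 'I_N} to R. *)
Definition game (R : realFieldType) (N : nat) := {set 'I_N} -> R.

Definition marg (R : realFieldType) (N : nat) (G : game R N) (i : 'I_N)
  (S : {set 'I_N}) : R := G (i |: S) - G S.

(* Pr{f_i = S} = |S|! (N - |S| - 1)! / N!  for S ⊆ A \ {i} *)
Definition shap_weight (R : realFieldType) (N : nat) (S : {set 'I_N}) : R :=
  ((#|S|)`! * (N - #|S| - 1)`!)%:R / (N`!)%:R.

(* expectation over the random coalition f_i *)
Definition shap_E (R : realFieldType) (N : nat) (i : 'I_N)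
  (X : {set 'I_N} -> R) : R :=
  \sum_(S : {set 'I_N} | i \notin S) shap_weight R S * X S.

Definition shapley_value (R : realFieldType) (N : nat) (G : game R N)
  (i : 'I_N) : R := shap_E i (marg G i).

Definition shapley_uncertainty (R : realFieldType) (N : nat) (G : game R N)
  (i : 'I_N) : R :=
  shap_E i (fun S => (marg G i S - shapley_value G i) ^+ 2).

From mathcomp Require Import all_boot all_order all_algebra ring.
Set Implicit Arguments. Unset Strict Implicit. Unset Printing Implicit Defensive.
Import Order.TTheory GRing.Theory Num.Theory.
Local Open Scope ring_scope.

(* Shapley's random-order model: if s is a uniformly random ordering of the
   players and P_j(s) is the set of players preceding j in s, then P_j(s) has
   the law of f_j.  Couple all players through the same ordering and put
   X_j := d_j G(P_j(s)) - V_j(G).  Along s the marginal contributions telescope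
   to G(A) - G(0), which is also sum_j V_j(G), so sum_j X_j = 0 for every s.
   Hence X_i^2 = (sum_(j != i) X_j)^2 <= (N - 1) sum_(j != i) X_j^2 by
   Cauchy-Schwarz, and averaging over s gives the inequality. *)

Lemma sqr_sum_le_card (R : realFieldType) (I : finType) (P : pred I) (y : I -> R) :
  (\sum_(j | P j) y j) ^+ 2 <= #|P|%:R * \sum_(j | P j) y j ^+ 2.
Proof.
set a := \sum_(j | P j) y j; set b := \sum_(j | P j) y j ^+ 2.
have sum_sqr_diff : \sum_(j | P j) \sum_(k | P k) (y j - y k) ^+ 2
    = (#|P|%:R * b - a ^+ 2) *+ 2.
  under eq_bigr do rewrite (eq_bigr _ (fun k _ => sqrrB (y _) (y k))).
  under eq_bigr do rewrite big_split /= sumrB sumr_const sumrMnl -mulr_sumr.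
  rewrite big_split /= sumrB sumr_const 2!sumrMnl -mulr_suml -/a -/b.
  by rewrite -[b *+ _]mulr_natl; ring.
have : 0 <= \sum_(j | P j) \sum_(k | P k) (y j - y k) ^+ 2.
  by apply: sumr_ge0 => j _; apply: sumr_ge0 => k _; apply: sqr_ge0.
by rewrite sum_sqr_diff pmulrn_lge0 // subr_ge0.
Qed.

Section Orderings.
Variables (R : realFieldType) (T : finType).
Implicit Types (U S : {set T}) (s : seq T).

(* For #|U| = n, the sum of H over all orderings (duplicate-free enumerations)
   of U, grouped by their last element. *)
Fixpoint sum_orders (n : nat) U (H : seq T -> R) : R :=
  if n is n'.+1 then \sum_(x in U) sum_orders n' (U :\ x) (fun s => H (rcons s x))
  else H [::].

Lemma set_rcons s x : [set:: rcons s x] = x |: [set:: s].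
Proof. by apply/setP => y; rewrite !inE mem_rcons in_cons. Qed.

Lemma ordering_rcons U x s : x \in U -> uniq s -> [set:: s] = U :\ x ->
  uniq (rcons s x) /\ [set:: rcons s x] = U.
Proof.
move=> xU us sUx; rewrite rcons_uniq us set_rcons sUx setD1K // andbT.
by split=> //; apply/negP => xs; move: (setD11 x U); rewrite -sUx inE xs.
Qed.

Lemma cardsD1_in U x n : #|U| = n.+1 -> x \in U -> #|U :\ x| = n.
Proof. by rewrite (cardsD1 x) => + xU; rewrite xU => -[]. Qed.

Lemma ler_sum_orders n U H1 H2 : #|U| = n ->
  (forall s, uniq s -> [set:: s] = U -> H1 s <= H2 s) ->
  sum_orders n U H1 <= sum_orders n U H2.
Proof.
elim: n U H1 H2 => [|n IH] U H1 H2 /= cU le_H.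
  by apply: le_H => //; rewrite set_nil (cards0_eq cU).
apply: ler_sum => x xU; apply: IH; first exact: cardsD1_in.
by move=> s us sUx; case: (ordering_rcons xU us sUx); apply: le_H.
Qed.

Lemma eq_sum_orders n U H1 H2 : #|U| = n ->
  (forall s, uniq s -> [set:: s] = U -> H1 s = H2 s) ->
  sum_orders n U H1 = sum_orders n U H2.
Proof.
by move=> cU eqH; apply/le_anti; rewrite !ler_sum_orders // => s us sU; rewrite eqH.
Qed.

Lemma sum_orders_sum n U (I : finType) (P : pred I) (H : I -> seq T -> R) :
  sum_orders n U (fun s => \sum_(j | P j) H j s) = \sum_(j | P j) sum_orders n U (H j).
Proof.
elim: n U H => [|n IH] U H //=.
by under eq_bigr do rewrite IH; rewrite exchange_big.
Qed.

Lemma sum_orders_mull n U (c : R) H :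
  sum_orders n U (fun s => c * H s) = c * sum_orders n U H.
Proof.
elim: n U H => [|n IH] U H //=.
by rewrite mulr_sumr; apply: eq_bigr => x _; rewrite IH.
Qed.

Lemma sum_orders_const n U (c : R) : #|U| = n -> sum_orders n U (fun=> c) = n`!%:R * c.
Proof.
elim: n U => [|n IH] U cU /=; first by rewrite mul1r.
rewrite (eq_bigr (fun=> n`!%:R * c)) => [|x xU]; last by rewrite IH // (cardsD1_in cU).
by rewrite sumr_const cU -mulrnAl -mulr_natl -natrM factS mulnC.
Qed.

Definition preds (j : T) s : {set T} := [set:: take (index j s) s].

Lemma preds_rcons j s x : j \in s -> preds j (rcons s x) = preds j s.
Proof. by move=> js; rewrite /preds -cats1 index_cat js takel_cat // index_size. Qed.

Lemma preds_rcons_last j s : j \notin s -> preds j (rcons s j) = [set:: s].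
Proof.
by move=> js; rewrite /preds -cats1 index_cat (negbTE js) /= eqxx addn0 take_size_cat.
Qed.

Lemma telescope_preds (F : {set T} -> R) s : uniq s ->
  \sum_(j <- s) (F (j |: preds j s) - F (preds j s)) = F [set:: s] - F set0.
Proof.
elim/last_ind: s => [|s x IH]; first by rewrite big_nil set_nil subrr.
rewrite rcons_uniq => /andP[xs us]; rewrite -cats1 big_cat big_seq1 /= cats1.
rewrite (eq_big_seq (fun j => F (j |: preds j s) - F (preds j s))) => [|j js].
  by rewrite IH // preds_rcons_last // set_rcons addrC addrA subrK.
by rewrite preds_rcons.
Qed.

(* For #|U| = n, the number of orderings of U in which the players before j
   are exactly S. *)
Definition preds_count (n : nat) U (j : T) S : nat :=
  if S \subset U :\ j then (#|S|`! * (n - #|S| - 1)`!)%N else 0%N.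

Lemma subsetD1D1 U S j x : S \subset U :\ j -> (S \subset U :\ x :\ j) = (x \notin S).
Proof.
move=> /subsetP SUj; apply/subsetP/idP => [SUxj | xS y yS].
  by apply/negP => /SUxj; rewrite !inE eqxx andbF.
have := SUj y yS; rewrite !inE => /andP[-> ->]; rewrite andbT.
by apply: contraNneq xS => <-.
Qed.

Lemma sum_preds_count_subset n U j S : #|U :\ j| = n -> S \subset U :\ j ->
  (\sum_(x in U | x != j) preds_count n (U :\ x) j S
    = (n - #|S|) * (#|S|`! * (n - #|S| - 1)`!))%N.
Proof.
move=> cUj SUj; rewrite /preds_count.
under eq_bigr => x _ do rewrite (subsetD1D1 _ SUj).
rewrite -big_mkcondr /= sum_nat_const; congr (_ * _)%N.
rewrite -cUj -{2}(setIidPr SUj) -cardsD; apply: eq_card => x.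
by rewrite !inE -topredE /=; case: (x \in U) (x == j) (x \in S) => [] [] [].
Qed.

Lemma preds_countS n U j S : #|U| = n.+1 -> j \in U ->
  preds_count n.+1 U j S
    = ((S == U :\ j) * n`! + \sum_(x in U | x != j) preds_count n (U :\ x) j S)%N.
Proof.
move=> cU jU; have cUj := cardsD1_in cU jU.
have [SUj|] := boolP (S \subset U :\ j); last first.
  move=> SUj; rewrite /preds_count (negbTE SUj) big1 => [|x /andP[xU xj]].
    by case: eqP SUj => // ->; rewrite subxx.
  case: ifP => // SUxj; case/negP: SUj; apply: subset_trans SUxj _.
  by apply/subsetP => y; rewrite !inE => /and3P[-> _ ->].
rewrite sum_preds_count_subset // /preds_count SUj.
have [-> | neS] := eqVneq S (U :\ j).
  by rewrite cUj subnn mul0n addn0 mul1n subSnn subnn muln1.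
have ltSn : (#|S| < n)%N by rewrite -cUj proper_card // properEneq neS.
rewrite mul0n add0n subn1 (subSn (ltnW ltSn)) succnK subn1.
have : (0 < n - #|S|)%N by rewrite subn_gt0.
by case: (n - #|S|)%N => // m _; rewrite factS mulnCA.
Qed.

Lemma sum_orders_preds n U j (F : {set T} -> R) : #|U| = n -> j \in U ->
  sum_orders n U (fun s => F (preds j s)) = \sum_S (preds_count n U j S)%:R * F S.
Proof.
elim: n U => [|n IH] U cU jU; first by rewrite (cards0_eq cU) inE in jU.
have cUx x : x \in U -> #|U :\ x| = n by apply: cardsD1_in.
rewrite /= (bigD1 j) //=.
have -> : sum_orders n (U :\ j) (fun s => F (preds j (rcons s j)))
          = n`!%:R * F (U :\ j).
  rewrite -(sum_orders_const _ (cUx j jU)); apply: eq_sum_orders; first exact: cUx.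
  move=> s us sUj; rewrite preds_rcons_last ?sUj //.
  by apply/negP => js; move: (setD11 j U); rewrite -sUj inE js.
rewrite (eq_bigr (fun x => \sum_S (preds_count n (U :\ x) j S)%:R * F S))
  => [|x /andP[xU xj]]; last first.
  rewrite -IH ?cUx ?inE 1?eq_sym ?xj //; apply: eq_sum_orders; first exact: cUx.
  move=> s us sUx; rewrite preds_rcons //.
  have : j \in U :\ x by rewrite !inE eq_sym xj jU.
  by rewrite -sUx inE.
under [RHS]eq_bigr do rewrite preds_countS // natrD mulrDl.
rewrite big_split /= exchange_big /=; congr (_ + _).
  rewrite (bigD1 (U :\ j)) //= eqxx mul1n big1 ?addr0 // => S /negbTE ->.
  by rewrite mul0n mul0r.
by apply: eq_bigr => S _; rewrite natr_sum mulr_suml.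
Qed.

End Orderings.

Lemma cardsT_ord n : #|[set: 'I_n]| = n.
Proof. by rewrite cardsT card_ord. Qed.

Section Shapley.
Variables (R : realFieldType) (N : nat) (G : game R N).

Let deviation (j : 'I_N) (S : {set 'I_N}) : R := marg G j S - shapley_value G j.

Lemma sum_orders_shap_E j (F : {set 'I_N} -> R) :
  sum_orders N setT (fun s => F (preds j s)) = N`!%:R * shap_E j F.
Proof.
rewrite sum_orders_preds ?cardsT_ord ?inE // /shap_E mulr_sumr [RHS]big_mkcond.
apply: eq_bigr => S _; rewrite /preds_count subsetD1 subsetT /=.
case: (j \in S); first by rewrite mul0r.
by rewrite /= /shap_weight mulrA [N`!%:R * _]mulrC divfK // pnatr_eq0 -lt0n fact_gt0.
Qed.

Lemma sum_marg_preds s : uniq s -> [set:: s] = setT ->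
  \sum_j marg G j (preds j s) = G setT - G set0.
Proof.
move=> us sT; rewrite -sT -telescope_preds // [RHS]big_uniq //.
by apply: eq_bigl => j; rewrite -[j \in s]in_set sT inE.
Qed.

Lemma shapley_efficiency : \sum_j shapley_value G j = G setT - G set0.
Proof.
apply: (@mulfI _ (N`!%:R)); first by rewrite pnatr_eq0 -lt0n fact_gt0.
rewrite mulr_sumr; under eq_bigr do rewrite -sum_orders_shap_E.
rewrite -sum_orders_sum -(sum_orders_const _ (cardsT_ord N)).
exact: eq_sum_orders (cardsT_ord N) sum_marg_preds.
Qed.

Lemma sqr_deviation_le i s : uniq s -> [set:: s] = setT ->
  deviation i (preds i s) ^+ 2
    <= (N - 1)%:R * \sum_(j | j != i) deviation j (preds j s) ^+ 2.
Proof.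
move=> us sT.
have : \sum_j deviation j (preds j s) = 0.
  by rewrite sumrB sum_marg_preds // shapley_efficiency subrr.
rewrite (bigD1 i) //= => /eqP; rewrite addr_eq0 => /eqP ->; rewrite sqrrN.
have -> : (N - 1)%N = #|[pred j | j != i]|.
  by rewrite subn1 -[in LHS](card_ord N) -(cardC1 i); apply: eq_card.
exact: sqr_sum_le_card.
Qed.

End Shapley.

Theorem mainTheorem5 (R : realFieldType) (N : nat) (hN : (2 <= N)%N)
  (G : game R N) (i : 'I_N) :
  shapley_uncertainty G i <=
    (N - 1)%:R * \sum_(j : 'I_N | j != i) shapley_uncertainty G j.
Proof.
(* The bound also holds for N = 1. *)
rewrite -(@ler_pM2l _ (N`!%:R)) ?ltr0n ?fact_gt0 //.
rewrite /shapley_uncertainty -sum_orders_shap_E mulrCA mulr_sumr.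
under eq_bigr do rewrite -sum_orders_shap_E.
rewrite -sum_orders_sum -sum_orders_mull.
exact: ler_sum_orders (cardsT_ord N) (sqr_deviation_le G i).
Qed.
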